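(* Let $(\mathcal{Y},\eta)$ be an $(n,m)$-voltage operator, let $\operatorname{Aut}(\mathcal{Y},\eta)$ be the subgroup of $\operatorname{Aut}(\mathcal{Y})$ of all $\tau$ with $\eta(W\tau)=\eta(W)$ for every $W\in\Pi(\mathcal{Y})$, and let $\mathcal{X}$ be an $n$-premaniplex. Let $\operatorname{Aut}(\mathcal{X})$ act on $\mathcal{X}\rtimes_\eta\mathcal{Y}$ by $(x,y)\mapsto(x\alpha,y)$ and $\operatorname{Aut}(\mathcal{Y},\eta)$ by $(x,y)\mapsto(x,y\tau)$. Then the subgroup of $\operatorname{Aut}(\mathcal{X}\rtimes_\eta\mathcal{Y})$ generated by these two groups is $\operatorname{Aut}(\mathcal{X})\times\operatorname{Aut}(\mathcal{Y},\eta)$, acting by $(x,y)(\alpha,\tau)=(x\alpha,y\tau)$.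
   Context: An $n$-premaniplex is an edge-coloured graph (semi-edges and parallel edges allowed) with colours $\{0,\dots,n-1\}$ such that every vertex (flag) is the start of exactly one dart of each colour, and for $|i-j|\ge2$ alternating $i,j$-paths of length 4 are closed; $x^i$ is the $i$-adjacent flag of $x$. $\mathcal{C}^n=\langle r_0,\dots,r_{n-1}\mid r_i^2,\ (r_ir_j)^2\ (|i-j|\ge2)\rangle$ acts on the left on flags by $r_ix=x^i$. Automorphisms act on the right and map paths to paths, $W\mapsto W\tau$. For a flag $y$ of an $m$-premaniplex $\mathcal{Y}$ and $\omega\in\mathcal{C}^m$, $W_\omega(y)$ is the homotopy class of paths from $y$ whose colour sequence $i_1,\dots,i_k$ satisfies $r_{i_k}\cdots r_{i_1}=\omega$; these form the fundamental groupoid $\Pi(\mathcal{Y})$. A voltage assignment $\eta:\Pi(\mathcal{Y})\to\mathcal{C}^n$ satisfies $\eta(W_1W_2)=\eta(W_2)\eta(W_1)$; $(\mathcal{Y},\eta)$ is an $(n,m)$-voltage operator. $\mathcal{X}\rtimes_\eta\mathcal{Y}$ has flags $\mathcal{X}\times\mathcal{Y}$ and $(x,y)^i=(\eta(W_{r_i}(y))x,r_iy)$, $i\in\{0,\dots,m-1\}$. *)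

From mathcomp Require Import all_boot.
From Stdlib Require Import Relations.Relation_Operators.
Set Implicit Arguments. Unset Strict Implicit. Unset Printing Implicit Defensive.

(* n-premaniplex: flags with, for each colour i < n, the i-adjacency
   x |-> x^i, an involution (fixed points = semi-edges); alternating
   i,j-paths of length 4 are closed when |i - j| >= 2. *)
Record premaniplex (n : nat) := Premaniplex {
  flag :> Type;
  adj : 'I_n -> flag -> flag;
  adjK : forall i x, adj i (adj i x) = x;
  adj_square : forall (i j : 'I_n), (i.+2 <= j) || (j.+2 <= i) ->
    forall x, adj j (adj i (adj j (adj i x))) = x }.

(* Elements of the Coxeter group C^n = <r_0..r_{n-1} | r_i^2, (r_i r_j)^2 (|i-j|>=2)>
   are represented by words; the word [:: a1; ...; ak] stands for r_a1 * ... * r_ak. *)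
Definition cox_relator (n : nat) (w : seq 'I_n) : Prop :=
  (exists i, w = [:: i; i]) \/
  (exists i j : 'I_n, ((i.+2 <= j) || (j.+2 <= i)) /\ w = [:: i; j; i; j]).

Inductive cox_step (n : nat) : seq 'I_n -> seq 'I_n -> Prop :=
| CoxStep u v w : cox_relator w -> cox_step (u ++ w ++ v) (u ++ v).

(* equality in C^n of the elements represented by two words *)
Definition coxeq (n : nat) : seq 'I_n -> seq 'I_n -> Prop :=
  clos_refl_sym_trans (seq 'I_n) (@cox_step n).

(* left action of C^n on flags: (r_a1 ... r_ak) x = r_a1 (... (r_ak x)), r_i x = x^i *)
Definition act (n : nat) (X : premaniplex n) (w : seq 'I_n) (x : X) : X :=
  foldr (fun a x => adj a x) x w.

(* The fundamental groupoid Pi(Y): the class W_omega(y) is indexed by the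
   pair (y, omega); it ends at omega y, and
   W_omega(y) W_omega'(omega y) = W_(omega' omega)(y).
   A voltage assignment eta : Pi(Y) -> C^n is given by eta y omega = eta(W_omega(y)),
   well defined on group elements and with eta(W1 W2) = eta(W2) eta(W1). *)
Record voltage (n m : nat) (Y : premaniplex m) := Voltage {
  eta :> Y -> seq 'I_m -> seq 'I_n;
  eta_wd : forall y w w', coxeq w w' -> coxeq (eta y w) (eta y w');
  eta_mul : forall y w w',
    coxeq (eta y (w' ++ w)) (eta (act w y) w' ++ eta y w) }.

(* flags of X ⋊_eta Y are pairs; (x,y)^i = (eta(W_{r_i}(y)) x, r_i y) *)
Definition vop_adj (n m : nat) (X : premaniplex n) (Y : premaniplex m)
  (eta : voltage n Y) (i : 'I_m) (p : X * Y) : X * Y :=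
  (act (eta p.2 [:: i]) p.1, adj i p.2).

(* automorphisms (acting on the right, x tau written tau x):
   bijections commuting with all adjacencies *)
Definition is_aut (T : Type) (k : nat) (a : 'I_k -> T -> T) (f : T -> T) : Prop :=
  (exists g, cancel f g /\ cancel g f) /\ (forall i x, f (a i x) = a i (f x)).

(* Aut(Y, eta): automorphisms tau of Y with eta(W tau) = eta(W) for all W;
   W_omega(y) tau = W_omega(y tau). *)
Definition is_eta_aut (n m : nat) (Y : premaniplex m) (eta : voltage n Y)
  (t : Y -> Y) : Prop :=
  is_aut (@adj m Y) t /\ (forall y w, coxeq (eta (t y) w) (eta y w)).

Inductive gen (T : Type) (S : (T -> T) -> Prop) : (T -> T) -> Prop :=
| gen_id : gen S id
| gen_mul f h : S f -> gen S h -> gen S (f \o h)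
| gen_inv f g h : S f -> cancel f g -> cancel g f -> gen S h -> gen S (g \o h).

From mathcomp Require Import all_boot.
From Stdlib Require Import Relations.Relation_Operators.

Set Implicit Arguments.
Unset Strict Implicit.
Unset Printing Implicit Defensive.

(* Automorphisms of X commute with the action of C^n, and an element tau of
   Aut(Y, eta) does not change the voltage eta(W_{r_i}(y)); hence
   (alpha, tau) commutes with every adjacency of X ⋊_eta Y.  Each generator
   is such a product map (with one trivial component), and product maps are
   closed under composition and inversion, so the generated group consists of
   exactly the product maps; these determine alpha and tau because X and Y
   are nonempty. *)

Section Action.

Variables (n : nat) (X : premaniplex n).

Lemma act_cat u v (x : X) : act (u ++ v) x = act u (act v x).
Proof. by rewrite /act foldr_cat. Qed.

Lemma act_coxeq w w' (x : X) : coxeq w w' -> act w x = act w' x.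
Proof.
elim=> {w w'} [w w' [u v r Hr] | w | w w' _ IH | w1 w2 w3 _ IH1 _ IH2] //.
- rewrite !act_cat; congr (act u _).
  case: Hr => [[i ->] | [i [j [Hij ->]]]] /=; first by rewrite adjK.
  by apply: adj_square; rewrite orbC.
- by rewrite IH1.
Qed.

Lemma act_aut a w (x : X) : is_aut (@adj n X) a -> a (act w x) = act w (a x).
Proof. by move=> [_ Ha]; elim: w => //= i w IH; rewrite Ha IH. Qed.

End Action.

Section Automorphisms.

Variables (T : Type) (k : nat) (f : 'I_k -> T -> T).

Lemma is_aut_id : is_aut f id.
Proof. by split=> //; exists id. Qed.

Lemma is_aut_comp a b : is_aut f a -> is_aut f b -> is_aut f (a \o b).
Proof.
move=> [[ga [aK Ka]] Ha] [[gb [bK Kb]] Hb]; split=> [|i x /=]; last by rewrite Hb Ha.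
by exists (gb \o ga); split=> x /=; rewrite ?aK ?bK ?Kb ?Ka.
Qed.

Lemma is_aut_inv a g : is_aut f a -> cancel a g -> cancel g a -> is_aut f g.
Proof.
move=> [_ Ha] aK Ka; split=> [|i x]; first by exists a.
by rewrite -{1}(Ka x) -Ha aK.
Qed.

End Automorphisms.

Section VoltageAutomorphisms.

Variables (n m : nat) (Y : premaniplex m) (eta : voltage n Y).

Lemma is_eta_aut_id : is_eta_aut eta id.
Proof. by split=> [|y w]; [exact: is_aut_id | exact: rst_refl]. Qed.

Lemma is_eta_aut_comp a b :
  is_eta_aut eta a -> is_eta_aut eta b -> is_eta_aut eta (a \o b).
Proof.
move=> [Ha Ea] [Hb Eb]; split=> [|y w]; first exact: is_aut_comp.
exact: rst_trans (Ea _ _) (Eb _ _).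
Qed.

Lemma is_eta_aut_inv a g :
  is_eta_aut eta a -> cancel a g -> cancel g a -> is_eta_aut eta g.
Proof.
move=> [Ha Ea] aK Ka; split=> [|y w]; first exact: is_aut_inv Ha aK Ka.
by apply: rst_sym; have := Ea (g y) w; rewrite Ka.
Qed.

End VoltageAutomorphisms.

Definition prod_map (A B : Type) (a : A -> A) (t : B -> B) (p : A * B) : A * B :=
  (a p.1, t p.2).

Lemma prod_map_can (A B : Type) (a ga : A -> A) (t gt : B -> B) :
  cancel a ga -> cancel t gt -> cancel (prod_map a t) (prod_map ga gt).
Proof. by move=> aK tK [x y]; rewrite /prod_map /= aK tK. Qed.

Lemma prod_map_faithful (A B : Type) (x0 : A) (y0 : B) (a a' : A -> A) (t t' : B -> B) :
  prod_map a t =1 prod_map a' t' -> a =1 a' /\ t =1 t'.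
Proof. by move=> E; split=> [x | y]; [case: (E (x, y0)) | case: (E (x0, y))]. Qed.

Lemma gen_ind (T : Type) (S P : (T -> T) -> Prop) :
  (forall f, S f -> P f) -> P id ->
  (forall f h, P f -> P h -> P (f \o h)) ->
  (forall f g, P f -> cancel f g -> cancel g f -> P g) ->
  forall h, gen S h -> P h.
Proof.
move=> SP P1 PM PV h; elim=> {h} [|f h Sf _ Ph | f g h Sf fK Kf _ Ph]; first done.
  exact: PM (SP f Sf) Ph.
exact: PM (PV f g (SP f Sf) fK Kf) Ph.
Qed.

Section SemidirectProduct.

Variables (n m : nat) (X : premaniplex n) (Y : premaniplex m) (eta : voltage n Y).

Lemma is_aut_vop_prod_map a t : is_aut (@adj n X) a -> is_eta_aut eta t ->
  is_aut (@vop_adj n m X Y eta) (prod_map a t).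
Proof.
move=> Ha [[[gt [tK Kt]] Ht] Et]; have [[ga [aK Ka]] _] := Ha; split.
  by exists (prod_map ga gt); split; apply: prod_map_can.
move=> i [x y]; rewrite /vop_adj /prod_map /= act_aut // Ht.
by congr pair; apply/act_coxeq/rst_sym/Et.
Qed.

Definition is_aut_prod (h : X * Y -> X * Y) : Prop :=
  exists a t, is_aut (@adj n X) a /\ is_eta_aut eta t /\ h =1 prod_map a t.

Lemma is_aut_prod_comp f h : is_aut_prod f -> is_aut_prod h -> is_aut_prod (f \o h).
Proof.
move=> [a [t [Ha [Ht Ef]]]] [b [u [Hb [Hu Eh]]]].
exists (a \o b), (t \o u); split; last split; [exact: is_aut_comp | exact: is_eta_aut_comp |].
by move=> p /=; rewrite Eh Ef.
Qed.

Lemma is_aut_prod_inv f g : is_aut_prod f -> cancel f g -> cancel g f -> is_aut_prod g.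
Proof.
move=> [a [t [Ha [Ht Ef]]]] fK _.
have [[ga [aK Ka]] _] := Ha; have [[[gt [tK Kt]] _] _] := Ht.
exists ga, gt; split; last split; [exact: is_aut_inv Ha aK Ka | exact: is_eta_aut_inv Ht tK Kt |].
by move=> p; apply: (canLR fK); rewrite Ef prod_map_can.
Qed.

End SemidirectProduct.

Theorem corollary6p2 (n m : nat) (X : premaniplex n) (Y : premaniplex m)
  (eta : voltage n Y) (x0 : X) (y0 : Y) :
  let adjXY := @vop_adj n m X Y eta in
  let S := fun h : X * Y -> X * Y =>
    (exists a, is_aut (@adj n X) a /\ h = (fun p => (a p.1, p.2))) \/
    (exists t, is_eta_aut eta t /\ h = (fun p => (p.1, t p.2))) in
  (* (x,y)(alpha,tau) = (x alpha, y tau) is an automorphism of X ⋊ Y *)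
  (forall a t, is_aut (@adj n X) a -> is_eta_aut eta t ->
     is_aut adjXY (fun p => (a p.1, t p.2))) /\
  (* the action of Aut(X) x Aut(Y,eta) is faithful *)
  (forall a t a' t', is_aut (@adj n X) a -> is_eta_aut eta t ->
     is_aut (@adj n X) a' -> is_eta_aut eta t' ->
     (forall p : X * Y, (a p.1, t p.2) = (a' p.1, t' p.2)) ->
     (forall x, a x = a' x) /\ (forall y, t y = t' y)) /\
  (* the generated subgroup is exactly the image of Aut(X) x Aut(Y,eta) *)
  (forall h, gen S h -> exists a t, is_aut (@adj n X) a /\ is_eta_aut eta t /\
     forall p, h p = (a p.1, t p.2)) /\
  (forall a t, is_aut (@adj n X) a -> is_eta_aut eta t ->
     exists h, gen S h /\ forall p, h p = (a p.1, t p.2)).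
Proof.
move=> adjXY S; split; last split; last split.
- exact: is_aut_vop_prod_map.
- by move=> a t a' t' _ _ _ _; apply: prod_map_faithful.
- suff: forall h, gen S h -> is_aut_prod eta h by [].
  apply: gen_ind.
  + move=> h [[a [Ha ->]] | [t [Ht ->]]].
      by exists a, id; split; last split; [| exact: is_eta_aut_id |].
    by exists id, t; split; last split; [exact: is_aut_id | |].
  + by exists id, id; split; last split; [exact: is_aut_id | exact: is_eta_aut_id | case].
  + exact: is_aut_prod_comp.
  + exact: is_aut_prod_inv.
- move=> a t Ha Ht; exists (prod_map a id \o (prod_map id t \o id)); split=> //.
  apply: gen_mul; first by left; exists a.
  by apply: gen_mul; [right; exists t | exact: gen_id].
Qed.
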